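(* Let $h_C,h_A:S\to\mathbb R_{\ge0}\cup\{\infty\}$ be two admissible (static) heuristics for $\mathcal T$, and let $h_{\mathrm{lazy}}$ be the lazy evaluation heuristic over the information source $\sigma_{\mathrm{lazy}}$. Then Dynamic A* with \texttt{reeval} set to true using $h_{\mathrm{lazy}}$ returns optimal solutions: whenever it returns a path, it is a solution of $\mathcal T$ of minimal cost.
   Context: A transition system is $\mathcal T=\langle S,L,c,T,s_I,S_G\rangle$ with finite states $S$, finite labels $L$, cost function $c:L\to\mathbb R_{\ge0}$, transitions $T\subseteq S\times L\times S$, initial state $s_I$, goal states $S_G\subseteq S$; $h^*(s)$ is the minimal cost of a path from $s$ to a goal ($\infty$ if none). A static heuristic $h:S\to\mathbb R_{\ge0}\cup\{\infty\}$ is admissible if $h(s)\le h^*(s)$ for all $s$. An information source $\sigma$ consists of a set $\mathcal I_\sigma$, $\iota_0^\sigma\in\mathcal I_\sigma$, $\mathrm{update}_\sigma:\mathcal I_\sigma\times T\to\mathcal I_\sigma$, $\mathrm{refine}_\sigma:\mathcal I_\sigma\times S\to\mathcal I_\sigma$. A dynamic heuristic over $\sigma$ is a function $h:S\times\mathcal I_\sigma\to\mathbb R_{\ge0}\cup\{\infty\}$. The source $\sigma_{\mathrm{lazy}}$: $\mathcal I_{\sigma_{\mathrm{lazy}}}$ is the set of functions $\iota:S\to\{C,A\}$; $\iota_0=\{s\mapsto C\mid s\in S\}$; $\mathrm{update}(\iota,t)=\iota$; $\mathrm{refine}(\iota,s)=\iota'$ where $\iota'$ agrees with $\iota$ except $\iota'(s)=A$.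 The lazy evaluation heuristic is $h_{\mathrm{lazy}}(s,\iota)=h_{\iota(s)}(s)$. Parent source $\sigma_p$: $\mathcal I_{\sigma_p}$ = partial functions $S\rightharpoonup\mathbb R_{\ge0}\times(T\cup\{\bot\})$; $\iota_0=\{s_I\mapsto\langle0,\bot\rangle\}$; refine is the identity; $\mathrm{update}(\iota,\langle s,\ell,s'\rangle)$ with $\iota(s)=\langle g,\cdot\rangle$ changes only $s'$, setting it to $\langle g+c(\ell),\langle s,\ell,s'\rangle\rangle$ if $\iota(s')$ is undefined or has $g$-component $\ge g+c(\ell)$, otherwise unchanged. Dynamic A* takes $\mathcal T$, sources $\sigma_p,\sigma_h$, a dynamic heuristic $h$ over $\sigma_h$ and a Boolean flag \texttt{reeval}. Notation: at any moment $g(s)$ is the $g$-component of the current $\mathcal I(\sigma_p)(s)$ and $h(s)$ denotes $h(s,\mathcal I(\sigma_h))$ for the current $\mathcal I(\sigma_h)$. Open is a priority queue of entries $\langle s,g,h\rangle$ (duplicates allowed), popped by minimal stored value $g+h$ (ties arbitrary). Algorithm: 1. $\mathcal I(\sigma):=\iota_0^\sigma$ for both sources; $S_{\mathrm{known}}:=\{s_I\}$; Closed $:=\emptyset$; Open empty. If $h(s_I)<\infty$ insert $\langle s_I,g(s_I),h(s_I)\rangle$. 2. While Open is nonempty: pop an entry $\langle s,\hat g,\hat h\rangle$ of minimal $\hat g+\hat h$. If $s\in$ Closed, continue with the next iteration. Otherwise set $\mathcal I(\sigma):=\mathrm{refine}_\sigma(\mathcal I(\sigma),s)$ for both sources. If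 \texttt{reeval} is true and $\hat h<h(s)$: if $h(s)<\infty$ insert $\langle s,g(s),h(s)\rangle$; continue with the next iteration (this is a re-evaluation). Otherwise add $s$ to Closed ($s$ is expanded). If $s\in S_G$, return the path obtained by following the parent pointers of $\mathcal I(\sigma_p)$ from $s$ back to $s_I$. Otherwise, for each $t=\langle s,\ell,s'\rangle\in T$ in some order: let $old:=g(s')$ if $s'\in S_{\mathrm{known}}$ and undefined otherwise; set $\mathcal I(\sigma):=\mathrm{update}_\sigma(\mathcal I(\sigma),t)$ for both sources; add $s'$ to $S_{\mathrm{known}}$; if $h(s')=\infty$ skip $s'$; else if $old$ is undefined insert $\langle s',g(s'),h(s')\rangle$; else if $old>g(s')$, remove $s'$ from Closed if it is there (reopening) and insert $\langle s',g(s'),h(s')\rangle$. 3. Return ''unsolvable''. *)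

From mathcomp Require Import all_boot.
From Stdlib Require Import Reals.
From Stdlib Require List.

Set Implicit Arguments.
Unset Strict Implicit.
Unset Printing Implicit Defensive.

(* Extended non-negative values R_{>=0} U {oo}: [Some x] is the real x,
   [None] is oo. *)

Section DynamicAStar.

Variables (S L : finType) (c : L -> R) (T : {set S * L * S})
          (sI : S) (SG : {set S}).

Definition trans : Type := (S * L * S)%type.
Definition src (t : trans) : S := t.1.1.
Definition lbl (t : trans) : L := t.1.2.
Definition tgt (t : trans) : S := t.2.

Fixpoint is_path (s : S) (p : seq trans) : Prop :=
  match p with
  | [::] => True
  | t :: p' => t \in T /\ src t = s /\ is_path (tgt t) p'
  end.

Definition path_end (s : S) (p : seq trans) : S := last s (map tgt p).

Definition cost (p : seq trans) : R :=
  List.fold_right (fun t acc => (c (lbl t) + acc)%R) 0%R p.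

Definition is_solution_from (s : S) (p : seq trans) : Prop :=
  is_path s p /\ path_end s p \in SG.

Definition is_solution (p : seq trans) : Prop := is_solution_from sI p.

Definition optimal_solution (p : seq trans) : Prop :=
  is_solution p /\ forall q, is_solution q -> (cost p <= cost q)%R.

(* h(s) <= h*(s) = inf of the costs of the paths from s to a goal
   (oo if there is none), i.e. h(s) is below the cost of every such path. *)
Definition admissible (h : S -> option R) : Prop :=
  forall s p, is_solution_from s p -> exists x, h s = Some x /\ (x <= cost p)%R.

Definition nonneg_heuristic (h : S -> option R) : Prop :=
  forall s x, h s = Some x -> (0 <= x)%R.

Record info_source := InfoSource {
  isrc_I : Type;
  isrc_init : isrc_I;
  isrc_update : isrc_I -> trans -> isrc_I;
  isrc_refine : isrc_I -> S -> isrc_I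
}.

Inductive CA := CC | AA.

Definition sigma_lazy : info_source :=
  @InfoSource (S -> CA) (fun _ => CC) (fun i _ => i)
              (fun i s => fun s' => if s' == s then AA else i s').

Definition h_lazy (hC hA : S -> option R) (s : S) (i : S -> CA) : option R :=
  match i s with CC => hC s | AA => hA s end.

Definition pinfo : Type := S -> option (R * option trans).

Definition p_update (i : pinfo) (t : trans) : pinfo :=
  match i (src t) with
  | Some (g, _) =>
      fun x => if x == tgt t then
                 match i (tgt t) with
                 | None => Some ((g + c (lbl t))%R, Some t)
                 | Some (g', p') =>
                     if Rle_dec (g + c (lbl t)) g'
                     then Some ((g + c (lbl t))%R, Some t)
                     else Some (g', p')
                 end
               else i x
  | None => i (* unreachable: update is only applied from expanded states *)
  end.

Definition sigma_p : info_source :=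
  @InfoSource pinfo (fun s => if s == sI then Some (0%R, None) else None)
              p_update (fun i _ => i).

Definition gval (i : pinfo) (s : S) : option R := option_map fst (i s).

Section Algo.
Variables (sh : info_source) (h : S -> isrc_I sh -> option R) (reeval : bool).

Record config := Config {
  cf_Ip : pinfo;
  cf_Ih : isrc_I sh;
  cf_known : {set S};
  cf_closed : {set S};
  cf_open : seq (S * R * R) (* entries <s, g, h>, duplicates allowed *)
}.

Definition init_config : config :=
  Config (@isrc_init sigma_p) (@isrc_init sh) [set sI] set0
    (match h sI (@isrc_init sh) with
     | Some x => [:: (sI, 0%R, x)]
     | None => [::]
     end).

Definition process (cf : config) (t : trans) : config :=
  let s' := tgt t in
  let old := if s' \in cf_known cf then gval (cf_Ip cf) s' else None in
  let Ip' := @isrc_update sigma_p (cf_Ip cf) t in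
  let Ih' := @isrc_update sh (cf_Ih cf) t in
  let known' := s' |: cf_known cf in
  match h s' Ih', gval Ip' s' with
  | Some hv, Some gv =>
      match old with
      | None => Config Ip' Ih' known' (cf_closed cf) ((s', gv, hv) :: cf_open cf)
      | Some o =>
          if Rlt_dec gv o
          then Config Ip' Ih' known' (cf_closed cf :\ s') ((s', gv, hv) :: cf_open cf)
          else Config Ip' Ih' known' (cf_closed cf) (cf_open cf)
      end
  | _, _ => Config Ip' Ih' known' (cf_closed cf) (cf_open cf)
  end.

Inductive parent_trace (i : pinfo) : S -> seq trans -> Prop :=
  | pt_init : parent_trace i sI [::]
  | pt_step s g t p :
      s <> sI -> i s = Some (g, Some t) -> parent_trace i (src t) p ->
      parent_trace i s (rcons p t).

Inductive astate :=
  | Running of config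
  | Returned of seq trans
  | Unsolvable.

Definition lt_ext (x : R) (y : option R) : Prop :=
  match y with None => True | Some y => (x < y)%R end.

Definition is_min_entry (q : seq (S * R * R)) (gh hh : R) : Prop :=
  List.Forall (fun e : S * R * R => (gh + hh <= e.1.2 + e.2)%R) q.

Inductive step : astate -> astate -> Prop :=
  | st_empty cf :
      cf_open cf = [::] -> step (Running cf) Unsolvable
  | st_closed cf q1 q2 s gh hh :
      cf_open cf = q1 ++ (s, gh, hh) :: q2 -> is_min_entry (cf_open cf) gh hh ->
      s \in cf_closed cf ->
      step (Running cf)
        (Running (Config (cf_Ip cf) (cf_Ih cf) (cf_known cf) (cf_closed cf) (q1 ++ q2)))
  | st_reeval cf q1 q2 s gh hh :
      cf_open cf = q1 ++ (s, gh, hh) :: q2 -> is_min_entry (cf_open cf) gh hh ->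
      s \notin cf_closed cf ->
      let Ip' := @isrc_refine sigma_p (cf_Ip cf) s in
      let Ih' := @isrc_refine sh (cf_Ih cf) s in
      reeval = true -> lt_ext hh (h s Ih') ->
      step (Running cf)
        (Running (Config Ip' Ih' (cf_known cf) (cf_closed cf)
           (match h s Ih', gval Ip' s with
            | Some x, Some g => (s, g, x) :: (q1 ++ q2)
            | _, _ => q1 ++ q2
            end)))
  | st_goal cf q1 q2 s gh hh p :
      cf_open cf = q1 ++ (s, gh, hh) :: q2 -> is_min_entry (cf_open cf) gh hh ->
      s \notin cf_closed cf ->
      let Ip' := @isrc_refine sigma_p (cf_Ip cf) s in
      let Ih' := @isrc_refine sh (cf_Ih cf) s in
      ~ (reeval = true /\ lt_ext hh (h s Ih')) ->
      s \in SG -> parent_trace Ip' s p ->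
      step (Running cf) (Returned p)
  | st_expand cf q1 q2 s gh hh ts :
      cf_open cf = q1 ++ (s, gh, hh) :: q2 -> is_min_entry (cf_open cf) gh hh ->
      s \notin cf_closed cf ->
      let Ip' := @isrc_refine sigma_p (cf_Ip cf) s in
      let Ih' := @isrc_refine sh (cf_Ih cf) s in
      ~ (reeval = true /\ lt_ext hh (h s Ih')) ->
      s \notin SG ->
      uniq ts -> (forall t, (t \in ts) = (t \in T) && (src t == s)) ->
      step (Running cf)
        (Running (foldl process
           (Config Ip' Ih' (cf_known cf) (s |: cf_closed cf) (q1 ++ q2)) ts)).

Inductive steps : astate -> astate -> Prop :=
  | steps_refl a : steps a a
  | steps_cons a b d : step a b -> steps b d -> steps a d.

Definition dyn_astar_returns (p : seq trans) : Prop :=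
  steps (Running init_config) (Returned p).

End Algo.
End DynamicAStar.

(* Every entry <s, g, h> of Open has g >= g(s) and an h that is admissible at s, and
   every solvable state that is not closed but has a g-value has an Open entry carrying
   exactly that g-value; this needs only that each heuristic value ever computed is
   admissible, which holds for the lazy heuristic whichever of h_C, h_A it consults, so
   re-evaluation plays no role. A closed state keeps all its edges towards solvable states
   relaxed, because lowering its g-value reopens it. Following a solution from s_I through
   closed states therefore reaches a non-closed state, and so an Open entry whose f-value is
   at most the cost of the solution. When a goal s is popped with minimal f-value, its
   parent trace is a solution of cost at most g(s) <= f, hence optimal. *)

From mathcomp Require Import all_boot.
From Stdlib Require Import Reals Lra.
From Stdlib Require List.

Set Implicit Arguments.
Unset Strict Implicit.
Unset Printing Implicit Defensive.

Local Open Scope R_scope.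

Section Optimality.
Variables (S L : finType) (c : L -> R) (T : {set S * L * S}) (sI : S) (SG : {set S}).
Hypothesis c_ge0 : forall l, 0 <= c l.

Definition solvable (s : S) := exists q, is_solution_from T SG s q.

Definition admissible_value (s : S) (x : R) :=
  0 <= x /\ forall q, is_solution_from T SG s q -> x <= cost c q.

Lemma solvable_src (t : trans S L) : t \in T -> solvable (tgt t) -> solvable (src t).
Proof. by move=> tT [q [pq endq]]; exists (t :: q). Qed.

Lemma is_path_rcons s p (t : trans S L) :
  is_path T s p -> t \in T -> src t = path_end s p -> is_path T s (rcons p t).
Proof.
elim: p s => [|t0 p IH] s /=; first by [].
by case=> t0T [src0 pp] tT srct; do !split => //; apply: IH.
Qed.

Lemma path_end_rcons s p (t : trans S L) : path_end s (rcons p t) = tgt t.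
Proof. by rewrite /path_end map_rcons last_rcons. Qed.

Lemma cost_rcons p (t : trans S L) : cost c (rcons p t) = cost c p + c (lbl t).
Proof. by elim: p => [|t0 p IH] /=; rewrite ?IH; lra. Qed.

(* [ole a b]: [a <= b] in [R U {oo}], with [None] read as [oo] *)
Definition ole (a b : option R) := forall y, b = Some y -> exists2 x, a = Some x & x <= y.

Lemma ole_defined a b : ole a b -> b <> None -> a <> None.
Proof. by case: b => [y|] // le _; case: (le y erefl) => x ->. Qed.

Definition relax (o : option R) (x : R) : R := if o is Some y then Rmin y x else x.

Lemma relax_le_old o x y : o = Some y -> relax o x <= y.
Proof. by move=> ->; apply: Rmin_l. Qed.

Lemma relax_le o x : relax o x <= x.
Proof. by case: o => [y|] /=; [apply: Rmin_r | lra]. Qed.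

Lemma p_update_other (Ip : pinfo S L) t s : s != tgt t -> p_update c Ip t s = Ip s.
Proof.
by move=> ne; rewrite /p_update; case: (Ip (src t)) => [[g _]|] //; rewrite (negbTE ne).
Qed.

Lemma gval_p_update_tgt (Ip : pinfo S L) t gs : gval Ip (src t) = Some gs ->
  gval (p_update c Ip t) (tgt t) = Some (relax (gval Ip (tgt t)) (gs + c (lbl t))).
Proof.
rewrite /gval /p_update; case: (Ip (src t)) => [[g p]|] //= [<-]; rewrite eqxx.
case: (Ip (tgt t)) => [[o po]|] //=.
by rewrite /Rmin; do 2 case: Rle_dec => ? /=; congr Some; lra.
Qed.

Lemma p_update_cases (Ip : pinfo S L) t s v : p_update c Ip t s = Some v ->
  Ip s = Some v \/
  [/\ s = tgt t, v.2 = Some t & exists2 gs, gval Ip (src t) = Some gs & v.1 = gs + c (lbl t)].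
Proof.
rewrite /p_update /gval; case: (Ip (src t)) => [[gs ps]|]; last by left.
case: eqP => [->|_]; last by left.
by case: (Ip (tgt t)) => [[o po]|]; [case: Rle_dec => ?|] => -[<-];
  by [left | right; split => //; exists gs].
Qed.

Lemma ole_refl a : ole a a.
Proof. by move=> y ->; exists y; first by []; apply: Rle_refl. Qed.

Lemma gval_p_update_le (Ip : pinfo S L) t s : ole (gval (p_update c Ip t) s) (gval Ip s).
Proof.
case: (eqVneq s (tgt t)) => [->|ne]; last by rewrite /gval p_update_other //; apply: ole_refl.
case Egs: (gval Ip (src t)) => [gs|].
  rewrite (gval_p_update_tgt Egs) => y Ey.
  by exists (relax (gval Ip (tgt t)) (gs + c (lbl t))); last exact: relax_le_old.
have -> : p_update c Ip t = Ip by move: Egs; rewrite /gval /p_update; case: (Ip (src t)).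
exact: ole_refl.
Qed.

Record parents_wf (Ip : pinfo S L) : Prop := {
  parent_edge : forall s g t, Ip s = Some (g, Some t) ->
    [/\ t \in T, tgt t = s & exists2 gu, gval Ip (src t) = Some gu & gu + c (lbl t) <= g];
  g_init : exists2 g, gval Ip sI = Some g & g <= 0;
  g_ge0 : forall s g, gval Ip s = Some g -> 0 <= g }.

Lemma parents_wf_p_update (Ip : pinfo S L) t :
  parents_wf Ip -> t \in T -> parents_wf (p_update c Ip t).
Proof.
case=> edge init ge0 tT; split.
- move=> s g t0 /p_update_cases [/edge [t0T <- [gu Egu le]] | [-> /= [->] [gs Egs ->]]].
    have [gu' -> le'] := @gval_p_update_le Ip t (src t0) _ Egu.
    by split => //; exists gu'; first by []; lra.
  have [gs' -> le'] := @gval_p_update_le Ip t (src t) _ Egs.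
  by split => //; exists gs'; first by []; lra.
- have [g Eg le] := init; have [g' -> le'] := @gval_p_update_le Ip t sI _ Eg.
  by exists g'; first by []; lra.
- move=> s g; rewrite /gval.
  case Es: (p_update c Ip t s) => [v|] //= [<-].
  case: (p_update_cases Es) => [Ev | [_ _ [gs Egs ->]]].
    by apply: (ge0 s); rewrite /gval Ev.
  by have := ge0 _ _ Egs; have := c_ge0 (lbl t); lra.
Qed.

Lemma parent_trace_solution (Ip : pinfo S L) s p :
  parents_wf Ip -> parent_trace sI Ip s p ->
  [/\ is_path T sI p, path_end sI p = s & exists2 g, gval Ip s = Some g & cost c p <= g].
Proof.
move=> wf; elim=> [|s0 g t p0 _ Es _ [pp pend [gu Egu le]]].
  have [g Eg _] := g_init wf.
  by split => //; exists g; last exact: (g_ge0 wf Eg).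
have [tT tgt_s [gu' Egu' le']] := parent_edge wf Es.
rewrite Egu in Egu'; case: Egu' => <- in le'.
split; [exact: is_path_rcons | by rewrite path_end_rcons | exists g; rewrite /gval ?Es //].
by rewrite cost_rcons; lra.
Qed.

Definition relaxed (g : S -> option R) (t : trans S L) :=
  exists gu gt, [/\ g (src t) = Some gu, g (tgt t) = Some gt & gt <= gu + c (lbl t)].

Lemma relaxed_p_update_self (Ip : pinfo S L) t :
  gval Ip (src t) <> None -> relaxed (gval (p_update c Ip t)) t.
Proof.
case Egs: (gval Ip (src t)) => [gs|] // _.
have Etgt := gval_p_update_tgt Egs.
case: (eqVneq (src t) (tgt t)) => [loop|ne].
  rewrite /relaxed -loop in Etgt *.
  by do 2 eexists; split; [exact: Etgt | exact: Etgt | have := c_ge0 (lbl t); lra].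
exists gs, (relax (gval Ip (tgt t)) (gs + c (lbl t))).
split; [by rewrite /gval p_update_other | exact: Etgt | exact: relax_le].
Qed.

Lemma relaxed_p_update (Ip : pinfo S L) t t0 :
  relaxed (gval Ip) t0 -> gval (p_update c Ip t) (src t0) = gval Ip (src t0) ->
  relaxed (gval (p_update c Ip t)) t0.
Proof.
case=> gu [gt [Egu Egt le]] Esrc.
have [gt' Egt' le'] := @gval_p_update_le Ip t (tgt t0) _ Egt.
by exists gu, gt'; split; rewrite ?Esrc //; lra.
Qed.

Section Algorithm.
Variables (sh : info_source S L) (h : S -> isrc_I sh -> option R) (reeval : bool).
Hypotheses (h_admissible : forall i, admissible c T SG (h^~ i))
           (h_nonneg : forall i, nonneg_heuristic (h^~ i)).

Lemma h_admissible_value s i x : h s i = Some x -> admissible_value s x.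
Proof.
move=> Ex; split; first exact: h_nonneg Ex.
by move=> q /(h_admissible i) [y]; rewrite /= Ex => -[[<-]].
Qed.

Lemma h_solvable s i : solvable s -> h s i <> None.
Proof. by case=> q /(h_admissible i) [y [/= ->]]. Qed.

Definition open_sound (g : S -> option R) (op : seq (S * R * R)) :=
  forall s gh hh, List.In (s, gh, hh) op ->
    exists2 gs, g s = Some gs & gs <= gh /\ admissible_value s hh.

Definition open_complete (g : S -> option R) (cl : {set S}) (op : seq (S * R * R)) :=
  forall s gs, solvable s -> s \notin cl -> g s = Some gs -> exists hh, List.In (s, gs, hh) op.

(* [pending]: the transitions of the state under expansion not yet processed *)
Record astar_inv (pending : seq (trans S L)) (cf : config sh) : Prop := {
  inv_parents : parents_wf (cf_Ip cf);
  inv_known : forall s, gval (cf_Ip cf) s <> None -> s \in cf_known cf;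
  inv_closed_defined : forall s, s \in cf_closed cf -> gval (cf_Ip cf) s <> None;
  inv_closed_nongoal : forall s, s \in cf_closed cf -> s \notin SG;
  inv_closed_relaxed : forall t, t \in T -> src t \in cf_closed cf -> solvable (tgt t) ->
    t \in pending \/ relaxed (gval (cf_Ip cf)) t;
  inv_open_sound : open_sound (gval (cf_Ip cf)) (cf_open cf);
  inv_open_complete : open_complete (gval (cf_Ip cf)) (cf_closed cf) (cf_open cf) }.

Record process_effect (cf cf' : config sh) (t : trans S L) : Prop := {
  effect_Ip : cf_Ip cf' = p_update c (cf_Ip cf) t;
  effect_known : cf_known cf' = tgt t |: cf_known cf;
  effect_closed_sub : {subset cf_closed cf' <= cf_closed cf};
  effect_closed_sup : forall s, s != tgt t -> s \in cf_closed cf -> s \in cf_closed cf';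
  effect_open_sup : forall e, List.In e (cf_open cf) -> List.In e (cf_open cf');
  effect_open_sub : forall s gh hh, List.In (s, gh, hh) (cf_open cf') ->
    List.In (s, gh, hh) (cf_open cf) \/
    [/\ s = tgt t, gval (cf_Ip cf') s = Some gh & h s (cf_Ih cf') = Some hh];
  effect_reclosed : tgt t \in cf_closed cf' -> solvable (tgt t) ->
    gval (cf_Ip cf') (tgt t) = gval (cf_Ip cf) (tgt t);
  effect_pushed : forall g, solvable (tgt t) -> tgt t \notin cf_closed cf' ->
    gval (cf_Ip cf') (tgt t) = Some g ->
    (exists hh, List.In (tgt t, g, hh) (cf_open cf')) \/
    (tgt t \notin cf_closed cf /\ gval (cf_Ip cf) (tgt t) = Some g) }.

Lemma processP cf t :
  (forall s, gval (cf_Ip cf) s <> None -> s \in cf_known cf) ->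
  (forall s, s \in cf_closed cf -> gval (cf_Ip cf) s <> None) ->
  gval (cf_Ip cf) (src t) <> None ->
  process_effect cf (process c sI h cf t) t.
Proof.
case: cf => Ip Ih kn cl op /= known closed_def.
case Egs: (gval Ip (src t)) => [gs|] // _.
have old : (if tgt t \in kn then gval Ip (tgt t) else None) = gval Ip (tgt t).
  by case: ifP => // /negP nk; case E: (gval Ip (tgt t)) => //; case: nk; apply: known; rewrite E.
rewrite /process /= old (gval_p_update_tgt Egs).
set gn := relax _ _.
have Egn := gval_p_update_tgt Egs; rewrite -/gn in Egn.
have unsolvable_tgt : h (tgt t) (isrc_update Ih t) = None -> ~ solvable (tgt t).
  by move=> Eh /(@h_solvable _ (isrc_update Ih t)).
case Eh: (h (tgt t) _) => [hv|]; last first.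
  split => //=; first by move=> *; left.
    by move=> _ /(unsolvable_tgt Eh).
  by move=> g /(unsolvable_tgt Eh).
case Eo: (gval Ip (tgt t)) => [o|]; last first.
  split => //=.
  - by move=> e; right.
  - by move=> s gh hh [[<- <- <-]|]; [right | left].
  - by move=> /closed_def; rewrite Eo.
  - by move=> g _ _; rewrite Egn => -[<-]; left; exists hv; left.
case: Rlt_dec => [improved|not_improved] /=.
  split => //=.
  - by move=> s; rewrite in_setD1 => /andP[].
  - by move=> s ne cls; rewrite in_setD1 ne.
  - by move=> e; right.
  - by move=> s gh hh [[<- <- <-]|]; [right | left].
  - by rewrite in_setD1 eqxx.
  - by move=> g _ _; rewrite Egn => -[<-]; left; exists hv; left.
have gn_o : gn = o by have := relax_le_old (gs + c (lbl t)) Eo; rewrite -/gn; lra.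
split => //=.
- by move=> s gh hh; left.
- by rewrite Egn gn_o.
- by move=> g _ ncl; rewrite Egn gn_o => -[<-]; right.
Qed.

Lemma process_inv rem t cf : t \in T -> gval (cf_Ip cf) (src t) <> None ->
  astar_inv (t :: rem) cf -> astar_inv rem (process c sI h cf t).
Proof.
move=> tT src_def I.
have [EIp Ekn cl_sub cl_sup op_sup op_sub reclosed pushed] :=
  processP (inv_known I) (inv_closed_defined I) src_def.
have g_le s := @gval_p_update_le (cf_Ip cf) t s.
split; rewrite ?EIp.
- exact: parents_wf_p_update (inv_parents I) tT.
- move=> s; rewrite Ekn in_setU1; case: (eqVneq s (tgt t)) => //= ne.
  by rewrite /gval p_update_other // => /(inv_known I).
- by move=> s /cl_sub /(inv_closed_defined I) /ole_defined; apply.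
- by move=> s /cl_sub /(inv_closed_nongoal I).
- move=> t0 t0T /[dup] cl0 /cl_sub /(inv_closed_relaxed I t0T) rel0 sol0.
  case: (eqVneq t0 t) => [->|ne]; first by right; exact: relaxed_p_update_self.
  case: rel0 => // [|rel0]; first by rewrite in_cons (negbTE ne); left.
  right; apply: relaxed_p_update rel0 _.
  case: (eqVneq (src t0) (tgt t)) => [Esrc|ne_src]; last by rewrite /gval p_update_other.
  by rewrite Esrc -EIp reclosed // -Esrc //; apply: solvable_src.
- move=> s gh hh /op_sub [/(inv_open_sound I) [gs /g_le [gs' -> le'] [le adm]] | [-> E Eh]].
    by exists gs' => //; split => //; lra.
  by rewrite -EIp; exists gh => //; split; [apply: Rle_refl | apply: h_admissible_value Eh].
- move=> s gs; case: (eqVneq s (tgt t)) => [-> | ne] sol ncl Egs.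
    rewrite -EIp in Egs.
    case: (pushed gs sol ncl Egs) => // -[ncl' Egs'].
    by have [hh /op_sup] := inv_open_complete I sol ncl' Egs'; exists hh.
  have ncl' : s \notin cf_closed cf by apply: contra ncl; apply: cl_sup.
  rewrite /gval p_update_other // in Egs.
  by have [hh /op_sup] := inv_open_complete I sol ncl' Egs; exists hh.
Qed.

Lemma foldl_process_inv s ts cf :
  (forall t, t \in ts -> t \in T /\ src t = s) -> gval (cf_Ip cf) s <> None ->
  astar_inv ts cf -> astar_inv [::] (foldl (process c sI h) cf ts).
Proof.
elim: ts cf => [|t ts IH] cf //= from_s s_def I.
have [tT src_t] := from_s t (mem_head _ _).
have Ip_proc : cf_Ip (process c sI h cf t) = p_update c (cf_Ip cf) t.
  apply: effect_Ip; apply: processP; rewrite ?src_t //.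
  - exact: inv_known I.
  - exact: inv_closed_defined I.
apply: IH; first by move=> t0 t0ts; apply: from_s; rewrite in_cons t0ts orbT.
  by rewrite Ip_proc; apply: ole_defined s_def; apply: gval_p_update_le.
by apply: process_inv; rewrite ?src_t.
Qed.

Lemma open_entry_at pending cf u gu q : astar_inv pending cf ->
  u \notin cf_closed cf -> gval (cf_Ip cf) u = Some gu -> is_solution_from T SG u q ->
  exists2 e, List.In e (cf_open cf) & e.1.2 + e.2 <= gu + cost c q.
Proof.
move=> I nclu Egu sol.
have [hh inop] := inv_open_complete I (ex_intro _ q sol) nclu Egu.
have [_ _ [_ [_ hh_le]]] := inv_open_sound I inop.
by exists (u, gu, hh) => //=; have := hh_le q sol; lra.
Qed.

Lemma open_entry_of_solution cf q u gu : astar_inv [::] cf ->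
  is_solution_from T SG u q -> gval (cf_Ip cf) u = Some gu ->
  exists2 e, List.In e (cf_open cf) & e.1.2 + e.2 <= gu + cost c q.
Proof.
move=> I; elim: q u gu => [|t q IH] u gu sol Egu;
  case: (boolP (u \in cf_closed cf)) => [clu|nclu]; try exact: open_entry_at I nclu Egu sol.
  by case: sol => _; move: (inv_closed_nongoal I clu) => /negP.
case: sol => -[tT [src_t pq]] endq.
have solt : solvable (tgt t) by exists q.
rewrite -src_t in clu Egu.
case: (inv_closed_relaxed I tT clu solt) => // -[gu' [gt [Egu' Egt le]]].
rewrite Egu in Egu'; case: Egu' => <- in le.
have [e ine le_e] := IH _ _ (conj pq endq) Egt.
by exists e => //=; lra.
Qed.

Lemma open_sound_pop g q1 q2 e : open_sound g (q1 ++ e :: q2) -> open_sound g (q1 ++ q2).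
Proof.
move=> snd s gh hh ine; apply: snd.
by move/List.in_app_iff: ine => ine; apply/List.in_app_iff; case: ine; [left | right; right].
Qed.

Lemma open_complete_pop g cl q1 q2 s gh hh :
  open_complete g cl (q1 ++ (s, gh, hh) :: q2) -> open_complete g (s |: cl) (q1 ++ q2).
Proof.
move=> cmp s0 gs sol; rewrite in_setU1 negb_or => /andP[ne ncl] Egs.
have [hh0 ine] := cmp s0 gs sol ncl Egs.
case: (@List.in_elt_inv _ _ (s, gh, hh) q1 q2 ine) => [[Es _ _] | ine']; last by exists hh0.
by rewrite Es eqxx in ne.
Qed.

Lemma astar_inv_open pending Ip Ih kn cl op Ih' op' :
  astar_inv pending (Config Ip Ih kn cl op) ->
  open_sound (gval Ip) op' -> open_complete (gval Ip) cl op' ->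
  astar_inv pending (Config Ip Ih' kn cl op').
Proof. by case=> /= *; split. Qed.

Lemma astar_inv_pop_closed pending Ip Ih kn cl q1 q2 s gh hh :
  astar_inv pending (Config Ip Ih kn cl (q1 ++ (s, gh, hh) :: q2)) -> s \in cl ->
  astar_inv pending (Config Ip Ih kn cl (q1 ++ q2)).
Proof.
move=> I cls; apply: (astar_inv_open _ I); first exact: open_sound_pop (inv_open_sound I).
move=> s0 gs sol ncl; apply: (open_complete_pop (inv_open_complete I)) sol _.
by rewrite in_setU1 negb_or ncl andbT; apply: contraNneq ncl => ->.
Qed.

Lemma astar_inv_reinsert pending Ip Ih kn cl q1 q2 s gh hh Ih' :
  astar_inv pending (Config Ip Ih kn cl (q1 ++ (s, gh, hh) :: q2)) ->
  astar_inv pending (Config Ip Ih' kn cl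
    (match h s Ih', gval Ip s with
     | Some x, Some g => (s, g, x) :: (q1 ++ q2)
     | _, _ => q1 ++ q2
     end)).
Proof.
move=> I; have snd := open_sound_pop (inv_open_sound I).
have cmp := open_complete_pop (inv_open_complete I).
apply: (astar_inv_open _ I).
  case Ex: (h s Ih') => [x|] //; case Eg: (gval Ip s) => [g|] //.
  move=> s0 gh0 hh0 /= [[<- <- <-] | ine]; last exact: snd ine.
  by exists g => //; split; [apply: Rle_refl | apply: h_admissible_value Ex].
move=> s0 gs sol ncl Egs; case: (eqVneq s0 s) => [Es | ne].
  rewrite Es in sol Egs *; rewrite Egs.
  by case Ex: (h s Ih') => [x|]; [exists x; left | case: (h_solvable sol Ex)].
have ncl' : s0 \notin s |: cl by rewrite in_setU1 negb_or ne.
have [hh0 ine] := cmp s0 gs sol ncl' Egs.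
by exists hh0; case: (h s Ih') => [x|] //; case: (gval Ip s) => [g|] //; right.
Qed.

Lemma astar_inv_close Ip Ih kn cl q1 q2 s gh hh Ih' ts :
  astar_inv [::] (Config Ip Ih kn cl (q1 ++ (s, gh, hh) :: q2)) -> s \notin SG ->
  (forall t, (t \in ts) = (t \in T) && (src t == s)) ->
  astar_inv ts (Config Ip Ih' kn (s |: cl) (q1 ++ q2)).
Proof.
case=> /= wf known cl_def cl_ng rel snd cmp ngs ts_from; split => //=.
- move=> s0; rewrite in_setU1 => /orP[/eqP -> | /cl_def //].
  by have [gs -> _] := snd s gh hh (List.in_elt _ _ _).
- by move=> s0; rewrite in_setU1 => /orP[/eqP -> | /cl_ng].
- move=> t tT; rewrite in_setU1 => /orP[/eqP src_t _ | cl_t sol].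
    by left; rewrite ts_from tT src_t eqxx.
  by case: (rel t tT cl_t sol) => //; right.
- exact: open_sound_pop snd.
- exact: open_complete_pop cmp.
Qed.

Lemma returned_optimal cf q1 q2 s gh hh p : astar_inv [::] cf ->
  cf_open cf = q1 ++ (s, gh, hh) :: q2 -> is_min_entry (cf_open cf) gh hh ->
  s \in SG -> parent_trace sI (cf_Ip cf) s p -> optimal_solution c T sI SG p.
Proof.
move=> I Eop min sg tr.
have [pp pend [g Eg cost_le]] := parent_trace_solution (inv_parents I) tr.
have ins : List.In (s, gh, hh) (cf_open cf) by rewrite Eop; apply: List.in_elt.
have [g' Eg' [g_le [hh_ge0 _]]] := inv_open_sound I ins.
rewrite Eg in Eg'; case: Eg' => <- in g_le.
split; first by split; rewrite // pend.
move=> q solq; have [g0 Eg0 g0_le] := g_init (inv_parents I).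
have [e ine e_le] := open_entry_of_solution I solq Eg0.
have := proj1 (List.Forall_forall _ _) min e ine => /= min_le; lra.
Qed.

Definition astate_inv (a : astate sh) : Prop :=
  match a with
  | Running cf => astar_inv [::] cf
  | Returned p => optimal_solution c T sI SG p
  | Unsolvable => True
  end.

Lemma step_astate_inv a b : step c T sI SG h reeval a b -> astate_inv a -> astate_inv b.
Proof.
case.
- done.
- by move=> [Ip Ih kn cl op] q1 q2 s gh hh /= -> _ cls /astar_inv_pop_closed; apply.
- by move=> [Ip Ih kn cl op] q1 q2 s gh hh /= -> _ _ _ _ /astar_inv_reinsert.
- move=> cf q1 q2 s gh hh p Eop min _ ? ? _ sg tr I; exact: returned_optimal I Eop min sg tr.
- move=> [Ip Ih kn cl op] q1 q2 s gh hh ts /= Eop _ ncls _ ngs _ ts_from I.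
  rewrite Eop in I.
  apply: (foldl_process_inv (s := s)).
  + by move=> t; rewrite ts_from => /andP[-> /eqP].
  + by rewrite /=; have [gs -> _] := inv_open_sound I (List.in_elt _ _ _).
  + exact: astar_inv_close I ngs ts_from.
Qed.

Lemma init_astar_inv : astar_inv [::] (init_config c sI h).
Proof.
have gval_init s0 : gval (isrc_init (sigma_p c sI)) s0 = if s0 == sI then Some 0 else None.
  by rewrite /gval /=; case: ifP.
rewrite /init_config; split => /=.
- split; rewrite ?gval_init ?eqxx.
  + by move=> s0 g t; case: ifP.
  + by exists 0; [| apply: Rle_refl].
  + by move=> s0 g; rewrite gval_init; case: ifP => // _ [<-]; apply: Rle_refl.
- by move=> s0; rewrite gval_init in_set1; case: ifP.
- by move=> s0; rewrite in_set0.
- by move=> s0; rewrite in_set0.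
- by move=> t _; rewrite in_set0.
- case Ex: (h sI _) => [x|] // s0 gh hh [[<- <- <-]|] //.
  exists 0; rewrite ?gval_init ?eqxx //.
  by split; [apply: Rle_refl | apply: h_admissible_value Ex].
- move=> s0 gs; rewrite gval_init; case: eqP => // -> sol _ [<-].
  by case Ex: (h sI _) => [x|]; [exists x; left | case: (h_solvable sol Ex)].
Qed.

Lemma steps_astate_inv a b : steps c T sI SG h reeval a b -> astate_inv a -> astate_inv b.
Proof. by elim=> // a0 b0 d0 /step_astate_inv step_inv _ IH /step_inv. Qed.

Theorem dyn_astar_optimal p :
  dyn_astar_returns c T sI SG h reeval p -> optimal_solution c T sI SG p.
Proof. by move/steps_astate_inv; apply; apply: init_astar_inv. Qed.

End Algorithm.
End Optimality.

Lemma h_lazy_admissible (S L : finType) c T SG (hC hA : S -> option R) (i : S -> CA) :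
  admissible c T SG hC -> admissible c T SG hA ->
  admissible (L := L) c T SG (h_lazy hC hA ^~ i).
Proof. by rewrite /h_lazy => hCa hAa s; case: (i s); [apply: hCa | apply: hAa]. Qed.

Lemma h_lazy_nonneg (S : finType) (hC hA : S -> option R) (i : S -> CA) :
  nonneg_heuristic hC -> nonneg_heuristic hA -> nonneg_heuristic (h_lazy hC hA ^~ i).
Proof. by rewrite /h_lazy => hC0 hA0 s; case: (i s); [apply: hC0 | apply: hA0]. Qed.

Theorem theorem11 (S L : finType) (c : L -> R) (T : {set S * L * S})
    (sI : S) (SG : {set S}) (hC hA : S -> option R) :
  (forall l, (0 <= c l)%R) ->
  nonneg_heuristic hC -> nonneg_heuristic hA ->
  admissible c T SG hC -> admissible c T SG hA ->
  forall p : seq (trans S L),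
    @dyn_astar_returns S L c T sI SG (sigma_lazy S L) (h_lazy hC hA) true p ->
    optimal_solution c T sI SG p.
Proof.
move=> c_ge0 hC0 hA0 hCa hAa p; apply: dyn_astar_optimal => // i.
  exact: h_lazy_admissible.
exact: h_lazy_nonneg.
Qed.
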